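(* For every integer $n\ge 1$, $$\Phi^{(3)}[a, a'; bq^n, b'; c; x, y] = \Phi^{(3)}[a, a'; b, b'; c; x, y] + \frac{bx(1-a)}{1-c} \sum_{k=1}^n q^{k-1} \Phi^{(3)}[aq, a'; bq^k, b'; cq; x, y]$$ and $$\Phi^{(3)}[a, a'; bq^{-n}, b'; c; x, y] = \Phi^{(3)}[a, a'; b, b'; c; x, y] - \frac{bx(1-a)}{1-c} \sum_{k=1}^n q^{-k} \Phi^{(3)}[aq, a'; bq^{1-k}, b'; cq; x, y].$$
   Context: Let $q$ be a complex number with $0<|q|<1$. For complex $z$ and integer $m\ge 0$, $(z;q)_m=\prod_{j=0}^{m-1}(1-zq^j)$, with $(z;q)_0=1$. The $q$-Appell function $\Phi^{(3)}$ (which has a single denominator parameter $c$) is $$\Phi^{(3)}[a, a'; b, b'; c; x, y] = \sum_{m, n \geq 0} \frac{(a; q)_m (a'; q)_n (b; q)_m (b'; q)_n}{(q; q)_m (q; q)_n (c; q)_{m+n}} x^m y^n.$$ Identities are understood as identities of power series in $x,y$ (formal, or convergent for small $|x|,|y|$), with complex parameters chosen so that no denominator occurring vanishes. *)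

From HB Require Import structures.
From mathcomp Require Import all_boot all_order all_algebra.
From mathcomp Require Import reals.
From mathcomp Require Export complex.
Set Implicit Arguments. Unset Strict Implicit. Unset Printing Implicit Defensive.
Import Order.TTheory GRing.Theory Num.Theory.
Local Open Scope ring_scope.

Definition qpoch {F : fieldType} (z q : F) (m : nat) : F :=
  \prod_(j < m) (1 - z * q ^+ j).

(* Formal power series in two variables x, y: coefficient of x^m y^n. *)
Definition fps2 (F : Type) := nat -> nat -> F.

Definition fps2_add {F : fieldType} (f g : fps2 F) : fps2 F :=
  fun m n => f m n + g m n.
Definition fps2_sub {F : fieldType} (f g : fps2 F) : fps2 F :=
  fun m n => f m n - g m n.
Definition fps2_scale {F : fieldType} (c : F) (f : fps2 F) : fps2 F :=
  fun m n => c * f m n.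
Definition fps2_mulx {F : fieldType} (f : fps2 F) : fps2 F :=
  fun m n => if m is m'.+1 then f m' n else 0.
Definition fps2_sum {F : fieldType} (lo hi : nat) (G : nat -> fps2 F) : fps2 F :=
  fun m n => \sum_(lo <= k < hi) G k m n.

Definition Phi3 {F : fieldType} (q a a' b b' c : F) : fps2 F :=
  fun m n => qpoch a q m * qpoch a' q n * qpoch b q m * qpoch b' q n
             / (qpoch q q m * qpoch q q n * qpoch c q (m + n)).

From HB Require Import structures.
From mathcomp Require Import all_boot all_order all_algebra.
From mathcomp Require Import reals complex.
From mathcomp Require Import ring.
From Stdlib Require Import FunctionalExtensionality.
Import Order.TTheory GRing.Theory Num.Theory.
Local Open Scope ring_scope.

(* Since (bq;q)_{m+1} - (b;q)_{m+1} = b (1 - q^{m+1}) (bq;q)_m, the coefficients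
   of x^{m+1} y^p satisfy the contiguous relation
     Phi3[b q] = Phi3[b] + b (1-a)/(1-c) * Phi3[aq; bq; cq]  (shifted by x),
   while the coefficients of x^0 do not depend on b.  Both identities follow
   by telescoping this relation along b, bq, ..., bq^n and along
   bq^-n, ..., bq^-1, b. *)

Section QPochhammer.
Variable F : fieldType.
Implicit Types z q : F.

Lemma qpoch0 z q : qpoch z q 0 = 1.
Proof. by rewrite /qpoch big_ord0. Qed.

Lemma qpochSr z q m : qpoch z q m.+1 = qpoch z q m * (1 - z * q ^+ m).
Proof. by rewrite /qpoch big_ord_recr. Qed.

Lemma qpochSl z q m : qpoch z q m.+1 = (1 - z) * qpoch (z * q) q m.
Proof.
rewrite /qpoch big_ord_recl expr0 mulr1; congr (_ * _).
by apply: eq_bigr => i _; rewrite /= exprS mulrA.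
Qed.

Lemma qpoch_mulq_sub z q m :
  qpoch (z * q) q m.+1 - qpoch z q m.+1 = z * (1 - q ^+ m.+1) * qpoch (z * q) q m.
Proof. by rewrite qpochSr qpochSl -mulrA -exprS; ring. Qed.

Lemma qpoch_neq0 z q m : (forall j, z * q ^+ j != 1) -> qpoch z q m != 0.
Proof.
by move=> zqj_neq1; apply/prodf_neq0 => j _; rewrite subr_eq0 eq_sym.
Qed.

End QPochhammer.

Lemma expr_neq1_norm_lt1 (R : numDomainType) (z : R) n :
  `|z| < 1 -> z ^+ n.+1 != 1.
Proof.
move=> z_lt1; apply/eqP => /(congr1 Num.norm); rewrite normrX normr1 => zn_eq1.
by have := exprn_ilt1 n.+1 (normr_ge0 z) z_lt1; rewrite zn_eq1 ltxx.
Qed.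

Lemma fps2_ext (F : Type) (f g : fps2 F) : (forall m n, f m n = g m n) -> f = g.
Proof.
by move=> fg; do 2 apply: functional_extensionality => ?; apply: fg.
Qed.

Lemma Phi3_0l (F : fieldType) (q a a' b b' c : F) p :
  Phi3 q a a' b b' c 0 p = qpoch a' q p * qpoch b' q p / (qpoch q q p * qpoch c q p).
Proof. by rewrite /Phi3 !qpoch0 add0n !mul1r mulr1. Qed.

Section ContiguousInB.
Variables (F : fieldType) (q a a' b' c : F).
Hypothesis q_not_root1 : forall j, q ^+ j.+1 != 1.
Hypothesis cq_neq1 : forall j, c * q ^+ j != 1.

Lemma Phi3_contiguous_b b m p :
  Phi3 q a a' (b * q) b' c m.+1 p =
  Phi3 q a a' b b' c m.+1 p
  + b * (1 - a) / (1 - c) * Phi3 q (a * q) a' (b * q) b' (c * q) m p.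
Proof.
have c_neq1 : 1 - c != 0 by have := cq_neq1 0; rewrite expr0 mulr1 subr_eq0 eq_sym.
have qm1_neq0 : 1 - q ^+ m.+1 != 0 by rewrite subr_eq0 eq_sym.
have qq_neq0 k : qpoch q q k != 0 by apply: qpoch_neq0 => j; rewrite -exprS.
have cqq_neq0 : qpoch (c * q) q (m + p) != 0.
  by apply: qpoch_neq0 => j; rewrite -mulrA -exprS.
rewrite /Phi3 addSn -[qpoch (b * q) q m.+1](subrK (qpoch b q m.+1)).
rewrite qpoch_mulq_sub (qpochSl _ a) (qpochSl _ c) (qpochSr _ q q m) -exprS.
by field; rewrite c_neq1 qm1_neq0 !qq_neq0 cqq_neq0.
Qed.

Lemma Phi3_b_mulqn b n m p :
  Phi3 q a a' (b * q ^+ n) b' c m.+1 p =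
  Phi3 q a a' b b' c m.+1 p
  + b * (1 - a) / (1 - c) *
    \sum_(1 <= k < n.+1) q ^+ (k - 1) * Phi3 q (a * q) a' (b * q ^+ k) b' (c * q) m p.
Proof.
apply/eqP; rewrite addrC -subr_eq; apply/eqP.
rewrite big_add1 /= mulr_sumr.
under eq_bigr do rewrite subn1 /=.
rewrite (@telescope_sumr_eq _ _ _ (fun k => Phi3 q a a' (b * q ^+ k) b' c m.+1 p))
  ?expr0 ?mulr1 //.
move=> k _ /=.
have -> : b * q ^+ k.+1 = b * q ^+ k * q by rewrite exprSr mulrA.
by rewrite Phi3_contiguous_b; ring.
Qed.

Lemma Phi3_b_divqn b n m p : q != 0 ->
  Phi3 q a a' (b * q ^- n) b' c m.+1 p =
  Phi3 q a a' b b' c m.+1 p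
  - b * (1 - a) / (1 - c) *
    \sum_(1 <= k < n.+1) q ^- k * Phi3 q (a * q) a' (b * q / q ^+ k) b' (c * q) m p.
Proof.
move=> q_neq0; rewrite -mulrN -sumrN.
apply/eqP; rewrite addrC -subr_eq; apply/eqP.
rewrite big_add1 /= mulr_sumr.
rewrite (@telescope_sumr_eq _ _ _ (fun k => Phi3 q a a' (b * q ^- k) b' c m.+1 p))
  ?expr0 ?invr1 ?mulr1 //.
move=> k _ /=.
have -> : b / q ^+ k = b / q ^+ k.+1 * q.
  by rewrite exprS; field; rewrite q_neq0 expf_neq0.
by rewrite Phi3_contiguous_b [b * q / _]mulrAC; ring.
Qed.

End ContiguousInB.

Theorem theorem11 (R : realType) (q a a' b b' c : R[i]) (n : nat)
  (hq0 : 0 < `|q|) (hq1 : `|q| < 1)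
  (hc : forall j : nat, c * q ^+ j != 1)
  (hn : (1 <= n)%N) :
  Phi3 q a a' (b * q ^+ n) b' c =
    fps2_add (Phi3 q a a' b b' c)
      (fps2_scale (b * (1 - a) / (1 - c))
         (fps2_mulx (fps2_sum 1 n.+1
            (fun k => fps2_scale (q ^+ (k - 1)) (Phi3 q (a * q) a' (b * q ^+ k) b' (c * q))))))
  /\
  Phi3 q a a' (b * q ^- n) b' c =
    fps2_sub (Phi3 q a a' b b' c)
      (fps2_scale (b * (1 - a) / (1 - c))
         (fps2_mulx (fps2_sum 1 n.+1
            (fun k => fps2_scale (q ^- k) (Phi3 q (a * q) a' (b * q / q ^+ k) b' (c * q)))))).
Proof.
have q_not_root1 j : q ^+ j.+1 != 1 by apply: expr_neq1_norm_lt1.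
have q_neq0 : q != 0 by rewrite -normr_gt0.
split; apply: fps2_ext => m p;
  rewrite /fps2_add /fps2_sub /fps2_scale /fps2_mulx /fps2_sum; case: m => [|m].
- by rewrite mulr0 addr0 !Phi3_0l.
- by rewrite (Phi3_b_mulqn _ q a a' b' c q_not_root1 hc).
- by rewrite mulr0 subr0 !Phi3_0l.
- by rewrite (Phi3_b_divqn _ q a a' b' c q_not_root1 hc).
Qed.
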